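(* Let $L:\mathbb{T}^d\times\mathbb{R}^d\to\mathbb{R}$ be continuous with $\lim_{|v|\to\infty}\inf_{x\in\mathbb{T}^d}L(x,v)/|v|=+\infty$, and let $(\varphi,\overline{H})$, with $\varphi:\mathbb{T}^d\to\mathbb{R}$ Lipschitz continuous and $\overline{H}\in\mathbb{R}$, be a supersolution to $H(x,-\nabla\varphi)=\overline{H}$. Given $\varepsilon>0$, there exist $\varkappa_0>0$ and a function $\delta:(0,\varkappa_0]\to(0,+\infty)$ such that for all $r>0$, $\varkappa\in(0,\varkappa_0]$, all partitions $\Delta$ of $[0,r]$ with $d(\Delta)\le\delta(\varkappa)$, and every $y\in\mathbb{T}^d$, \[\varphi(x_{y,\varkappa,r,\Delta}(r))+\int_0^rL(x_{y,\varkappa,r,\Delta}(t),v_{y,\varkappa,r,\Delta}(t))\,dt\le\varphi(y)-\overline{H}r+(r+1)\varepsilon.\]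
   Context: $\mathbb{T}^d=\mathbb{R}^d/\mathbb{Z}^d$; $x+v$ is the translate of $x\in\mathbb{T}^d$ by $v\in\mathbb{R}^d$. Vectors in $\mathbb{R}^d$ are columns, covectors rows. Hamiltonian: $H(x,p)=\max_{v\in\mathbb{R}^d}[pv-L(x,v)]$. Hadamard subdifferential: $p\in\partial_D^-\varphi(x)$ iff for all $w\in\mathbb{R}^d$, $\liminf_{h\downarrow0,w'\to w}\frac{\varphi(x+hw')-\varphi(x)}{h}\ge pw$. A pair $(\varphi,\overline{H})$ with $\varphi$ lower semicontinuous is a supersolution to $H(x,-\nabla\varphi)=\overline{H}$ if $H(x,-p)\ge\overline{H}$ for all $x\in\mathbb{T}^d$ and $p\in\partial_D^-\varphi(x)$. Moreau–Yosida transform: $\varphi_\varkappa(x)=\inf\{\varphi(x+v)+\frac{1}{2\varkappa^2}|v|^2:v\in\mathbb{R}^d\}$; $b_\varkappa[x]$ is a chosen vector with $\varphi(x+b_\varkappa[x])+\frac{1}{2\varkappa^2}|b_\varkappa[x]|^2=\varphi_\varkappa(x)$, $p_\varkappa[x]=\frac{1}{\varkappa^2}(-b_\varkappa[x])^\top$, and $\mathbbm{v}_\varkappa[x]$ is a chosen element of $\operatorname{Argmax}_{v\in\mathbb{R}^d}[-p_\varkappa[x]v-L(x+b_\varkappa[x],v)]$. For a partition $\Delta=\{t_i\}_{i=0}^n$, $0=t_0<\dots<t_n=r$, its fineness is $d(\Delta)=\max_i(t_{i+1}-t_i)$. For $y\in\mathbb{T}^d$ the motion and control are defined recursively: $x_{y,\varkappa,r,\Delta}(0)=y$;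 for $t\in[t_i,t_{i+1})$, $v_{y,\varkappa,r,\Delta}(t)=\mathbbm{v}_\varkappa[x_{y,\varkappa,r,\Delta}(t_i)]$, and for $t\in[t_i,t_{i+1}]$, $x_{y,\varkappa,r,\Delta}(t)=x_{y,\varkappa,r,\Delta}(t_i)+(t-t_i)\mathbbm{v}_\varkappa[x_{y,\varkappa,r,\Delta}(t_i)]$. *)

(* The torus T^d = R^d/Z^d is represented
   by Z^d-Zperiodic functions on R^d. *)
From HB Require Import structures.
From mathcomp Require Import all_boot all_order all_algebra.
From mathcomp Require Import all_classical all_reals all_analysis.
Set Implicit Arguments. Unset Strict Implicit. Unset Printing Implicit Defensive.
Import Order.TTheory GRing.Theory Num.Theory.
Import numFieldNormedType.Exports.
Local Open Scope ring_scope.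
Local Open Scope classical_set_scope.

Section Defs.
Variables (R : realType) (d : nat).

(* vectors are columns 'cV_d, covectors are rows 'rV_d *)
Definition enorm (v : 'cV[R]_d) : R := Num.sqrt (\sum_(i < d) v i 0 ^+ 2).

Definition pair_rv (p : 'rV[R]_d) (v : 'cV[R]_d) : R := (p *m v) 0 0.

Definition intvec (k : 'cV[R]_d) : Prop := forall i, exists z : int, k i 0 = z%:~R.

Definition Zperiodic (T : Type) (f : 'cV[R]_d -> T) : Prop :=
  forall x k, intvec k -> f (x + k) = f x.

Definition hamiltonian (L : 'cV[R]_d -> 'cV[R]_d -> R) (x : 'cV[R]_d) (p : 'rV[R]_d) : R :=
  sup [set pair_rv p v - L x v | v in [set: 'cV[R]_d]].

Definition hadamard_subdiff (phi : 'cV[R]_d -> R) (x : 'cV[R]_d) (p : 'rV[R]_d) : Prop :=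
  forall w : 'cV[R]_d, forall e : R, 0 < e ->
    exists eta : R, 0 < eta /\
      forall (h : R) (w' : 'cV[R]_d), 0 < h -> h < eta -> enorm (w' - w) < eta ->
        pair_rv p w - e <= (phi (x + h *: w') - phi x) / h.

Definition lower_semicont (phi : 'cV[R]_d -> R) : Prop :=
  forall x e, 0 < e -> exists eta, 0 < eta /\
    forall y, enorm (y - x) < eta -> phi x - e < phi y.

Definition supersolution (L : 'cV[R]_d -> 'cV[R]_d -> R) (phi : 'cV[R]_d -> R) (Hbar : R) : Prop :=
  lower_semicont phi /\
  forall x p, hadamard_subdiff phi x p -> Hbar <= hamiltonian L x (- p).

Definition moreau_yosida (phi : 'cV[R]_d -> R) (k : R) (x : 'cV[R]_d) : R :=
  inf [set phi (x + v) + (enorm v) ^+ 2 / (2 * k ^+ 2) | v in [set: 'cV[R]_d]].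

Definition Argmax (f : 'cV[R]_d -> R) : set 'cV[R]_d :=
  [set v | forall w, f w <= f v].

Definition p_of (b : R -> 'cV[R]_d -> 'cV[R]_d) (k : R) (x : 'cV[R]_d) : 'rV[R]_d :=
  (k ^+ 2)^-1 *: (- b k x)^T.

Fixpoint nodes (vv : R -> 'cV[R]_d -> 'cV[R]_d) (k : R) (t : nat -> R)
    (y : 'cV[R]_d) (i : nat) : 'cV[R]_d :=
  match i with
  | 0 => y
  | j.+1 => nodes vv k t y j + (t j.+1 - t j) *: vv k (nodes vv k t y j)
  end.

(* index i < n of the partition interval [t_i, t_{i+1}) containing s
   (the last interval is taken closed, so that the motion is also given at s = r) *)
Definition part_idx (n : nat) (t : nat -> R) (s : R) : nat :=
  \max_(i < n | (t i <= s)%R) (i : nat).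

Definition motion (vv : R -> 'cV[R]_d -> 'cV[R]_d) (k : R) (n : nat) (t : nat -> R)
    (y : 'cV[R]_d) (s : R) : 'cV[R]_d :=
  let i := part_idx n t s in nodes vv k t y i + (s - t i) *: vv k (nodes vv k t y i).

Definition control (vv : R -> 'cV[R]_d -> 'cV[R]_d) (k : R) (n : nat) (t : nat -> R)
    (y : 'cV[R]_d) (s : R) : 'cV[R]_d :=
  vv k (nodes vv k t y (part_idx n t s)).

Definition time_partition (n : nat) (t : nat -> R) (r : R) : Prop :=
  t 0%N = 0 /\ t n = r /\ forall i, (i < n)%N -> t i < t i.+1.

Definition fineness_le (n : nat) (t : nat -> R) (delta : R) : Prop :=
  forall i, (i < n)%N -> t i.+1 - t i <= delta.

End Defs.

From HB Require Import structures.
From mathcomp Require Import all_boot all_order all_algebra.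
From mathcomp Require Import all_classical all_reals all_analysis.
From mathcomp Require Import ring lra.
Import Order.TTheory GRing.Theory Num.Theory.
Import numFieldNormedType.Exports.
Local Open Scope ring_scope.
Local Open Scope classical_set_scope.

(* Write phi_k for the Moreau-Yosida transform, b = b_k[x] for its minimizer and
   p = -b^T/k^2.  Minimality of b makes p a Hadamard subgradient of phi at x + b,
   so the supersolution property and the choice of the control v = vv_k[x] give
   L(x + b, v) <= -Hbar - p v.  Testing the infimum defining phi_k(x + h v) with
   b - h v gives the semiconcavity bound
   phi_k(x + h v) <= phi_k(x) + h p v + h^2 |v|^2 / (2 k^2).
   Adding both along the Euler steps telescopes to
   phi_k(X_n) + sum_i h_i L(X_i + b_i, v_i) <= phi_k(y) - Hbar r + r eps/2
   once the steps are small compared with k^2.  The controls are bounded by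
   superlinearity and |b| <= 2 K k^2, so by uniform continuity of L the integrand
   along the motion is within eps/2 of L(X_i + b_i, v_i); finally
   phi <= phi_k + K^2 k^2 / 2 and phi_k <= phi. *)

Section EuclideanNorm.
Context {R : realType} {d : nat}.
Implicit Types u v w : 'cV[R]_d.

Definition dot u v : R := \sum_(i < d) u i 0 * v i 0.

Lemma dotvv_ge0 v : 0 <= dot v v.
Proof. by apply: sumr_ge0 => i _; rewrite -expr2 sqr_ge0. Qed.

Lemma enorm_ge0 v : 0 <= enorm v.
Proof. exact: sqrtr_ge0. Qed.

Lemma enorm_sqr v : enorm v ^+ 2 = dot v v.
Proof.
rewrite /enorm sqr_sqrtr; first by apply: eq_bigr => i _; rewrite expr2.
by apply: sumr_ge0 => i _; rewrite sqr_ge0.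
Qed.

Lemma dotC u v : dot u v = dot v u.
Proof. by apply: eq_bigr => i _; rewrite mulrC. Qed.

Lemma dotDl u v w : dot (u + v) w = dot u w + dot v w.
Proof. by rewrite /dot -big_split; apply: eq_bigr => i _; rewrite !mxE mulrDl. Qed.

Lemma dotDr u v w : dot w (u + v) = dot w u + dot w v.
Proof. by rewrite dotC dotDl !(dotC w). Qed.

Lemma dotZl a u v : dot (a *: u) v = a * dot u v.
Proof. by rewrite /dot mulr_sumr; apply: eq_bigr => i _; rewrite !mxE mulrA. Qed.

Lemma dotZr a u v : dot u (a *: v) = a * dot u v.
Proof. by rewrite dotC dotZl dotC. Qed.

Lemma dotNl u v : dot (- u) v = - dot u v.
Proof. by rewrite -scaleN1r dotZl mulN1r. Qed.

Lemma dotvv_eq0 v : dot v v = 0 -> v = 0.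
Proof.
move=> /eqP; rewrite psumr_eq0; last by move=> i _; rewrite -expr2 sqr_ge0.
move=> /allP v0; apply/matrixP => i j; rewrite (ord1 j) mxE.
by have := v0 i (mem_index_enum _); rewrite -expr2 sqrf_eq0 => /eqP.
Qed.

Lemma dot_sqr_le u v : dot u v ^+ 2 <= dot u u * dot v v.
Proof.
have [/dotvv_eq0 ->|vv0] := eqVneq (dot v v) 0.
  have -> : dot u 0 = 0 by rewrite /dot big1 // => i _; rewrite mxE mulr0.
  by rewrite expr0n /= mulr_ge0 ?dotvv_ge0.
have vv_gt0 : 0 < dot v v by rewrite lt_def vv0 dotvv_ge0.
have := dotvv_ge0 (u - (dot u v / dot v v) *: v).
rewrite -scaleNr !(dotDl, dotDr, dotZl, dotZr) (dotC v u).
set a := dot u u; set c := dot u v; set e := dot v v.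
have -> : a + - (c / e) * c + (- (c / e) * c + - (c / e) * (- (c / e) * e)) =
          a - c ^+ 2 / e by field.
by rewrite subr_ge0 ler_pdivrMr // mulrC.
Qed.

Lemma ler_norm_dot u v : `|dot u v| <= enorm u * enorm v.
Proof.
rewrite -(@ler_pXn2r _ 2) //; last by rewrite nnegrE mulr_ge0 ?enorm_ge0.
by rewrite exprMn !enorm_sqr real_normK ?num_real // dot_sqr_le.
Qed.

Lemma enormD_sqr u v : enorm (u + v) ^+ 2 = enorm u ^+ 2 + 2 * dot u v + enorm v ^+ 2.
Proof. by rewrite !enorm_sqr dotDl !dotDr (dotC v u); ring. Qed.

Lemma ler_enormD u v : enorm (u + v) <= enorm u + enorm v.
Proof.
rewrite -(@ler_pXn2r _ 2) //; try by rewrite nnegrE ?addr_ge0 ?enorm_ge0.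
rewrite enormD_sqr sqrrD lerD2r lerD2l.
have := ler_norm_dot u v; have := ler_norm (dot u v); lra.
Qed.

Lemma enormZ a v : enorm (a *: v) = `|a| * enorm v.
Proof.
apply/eqP; rewrite -(@eqrXn2 _ 2) //; try by rewrite ?mulr_ge0 ?enorm_ge0.
by rewrite exprMn !enorm_sqr dotZl dotZr mulrA -expr2 real_normK ?num_real.
Qed.

Lemma enormN v : enorm (- v) = enorm v.
Proof. by rewrite -scaleN1r enormZ normrN normr1 mul1r. Qed.

Lemma enorm0 : enorm (0 : 'cV[R]_d) = 0.
Proof. by rewrite /enorm big1 ?sqrtr0 // => i _; rewrite mxE expr0n. Qed.

Lemma ler_entry_enorm v i : `|v i 0| <= enorm v.
Proof.
rewrite -(@ler_pXn2r _ 2) //; try by rewrite nnegrE ?enorm_ge0.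
rewrite enorm_sqr real_normK ?num_real // /dot (bigD1 i) //= -expr2 lerDl.
by apply: sumr_ge0 => j _; rewrite -expr2 sqr_ge0.
Qed.

Lemma ler_mxnorm_enorm v : `|v| <= enorm v.
Proof.
rewrite [leLHS]/Num.norm /= mx_normrE.
apply/bigmax_leP; split; first exact: enorm_ge0.
by move=> [i j] _ /=; rewrite (ord1 j); exact: ler_entry_enorm.
Qed.

End EuclideanNorm.

Section UniformContinuity.
Context {R : realType}.

Lemma ball_prodP (U V : normedModType R) (x y : U * V) r :
  ball x r y <-> `|x.1 - y.1| < r /\ `|x.2 - y.2| < r.
Proof. by rewrite /ball /= /prod_ball -!ball_normE. Qed.

Lemma compact_unif_continuous (U V : normedModType R) (f : U * V -> R) (A : set (U * V)) :
  compact A -> continuous f -> forall e, 0 < e ->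
  exists2 eta, 0 < eta & forall w w', A w -> `|w'.1 - w.1| < eta ->
     `|w'.2 - w.2| < eta -> `|f w - f w'| < e.
Proof.
move=> cA cf e e0.
have := proj1 (compact_near_coveringP A) cA R (0:R)^'+
  (fun eta w => forall w', `|w'.1 - w.1| < eta ->
     `|w'.2 - w.2| < eta -> `|f w - f w'| < e).
case.
- move=> x Ax.
  have e2_gt0 : 0 < e / 2 by rewrite divr_gt0.
  have /cvgrPdist_lt /(_ (e / 2) e2_gt0) /nbhs_ballP [r /= r0 f_near] := cf x.
  have r2_gt0 : 0 < r / 2 by rewrite divr_gt0.
  exists (ball x (r / 2), [set y : R | 0 < y < r / 2]).
    split; first exact: nbhsx_ballx.
    rewrite /=; near=> y; apply/andP; split.
      by near: y; exact: nbhs_right_gt.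
    by near: y; exact: nbhs_right_lt.
  move=> [w eta] /= [/ball_prodP [xw1 xw2] /andP [eta0 eta_r]] w' ww'1 ww'2.
  have xw : ball x r w by apply/ball_prodP; split; lra.
  have xw' : ball x r w'.
    apply/ball_prodP; split.
      have := ler_normD (x.1 - w.1) (w.1 - w'.1); rewrite distrC in ww'1.
      rewrite addrA subrK; lra.
    have := ler_normD (x.2 - w.2) (w.2 - w'.2); rewrite distrC in ww'2.
    rewrite addrA subrK; lra.
  have := f_near _ xw; have := f_near _ xw' => /= fxw' fxw.
  have := ler_normD (f w - f x) (f x - f w'); rewrite addrA subrK.
  rewrite (distrC (f w) (f x)); lra.
- move=> x /= x0 x_near; exists (x / 2); first by rewrite divr_gt0.
  move=> w w' Aw ww'1 ww'2; apply: (x_near (x / 2)) => //; last by rewrite divr_gt0.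
  rewrite /ball_ /= sub0r normrN gtr0_norm ?divr_gt0 //; lra.
Unshelve. all: by end_near.
Qed.

End UniformContinuity.

Section Cube.
Context {R : realType}.

Lemma ler_mxnorm_tr m n (M : 'M[R]_(m, n)) : `|M^T| <= `|M|.
Proof.
rewrite [leLHS]/Num.norm /= mx_normrE.
apply/bigmax_leP; split => //= -[i j] _ /=; rewrite mxE.
by rewrite [leRHS]/Num.norm /= mx_normrE; apply/bigmax_geP; right; exists (j, i).
Qed.

Lemma trmx_continuous m n : continuous (fun M : 'M[R]_(m, n) => M^T).
Proof.
move=> M; apply/(@cvg_ballP _ _ _ (nbhs M) (nbhs_filter M)) => e e0.
apply/nbhs_ballP; exists e => // N; rewrite -!ball_normE /ball_ /= => MN.
rewrite -linearB /=; exact: le_lt_trans (@ler_mxnorm_tr m n (M - N)) MN.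
Qed.

Definition cube (d : nat) (a b : R) : set 'cV[R]_d := [set v | forall i, a <= v i 0 <= b].

Lemma cube_compact d a b : compact (cube d a b).
Proof.
have -> : cube d a b = (fun M : 'rV[R]_d => M^T) @`
   [set v : 'rV[R]_d | forall i, `[a, b]%classic (v ord0 i)].
  apply/seteqP; split => v /=.
    move=> av; exists v^T; last by rewrite trmxK.
    by move=> i; rewrite mxE /= in_itv /= av.
  by move=> [w aw <-] i; rewrite mxE; have := aw i; rewrite /= in_itv.
apply: (@continuous_compact _ _ (fun M : 'rV[R]_d => M^T)).
  exact/continuous_subspaceT/trmx_continuous.
by apply: (@rV_compact _ d (fun _ => `[a, b]%classic)) => i; exact: segment_compact.
Qed.

Lemma cube_enorm {d} (v : 'cV[R]_d) V : enorm v <= V -> cube d (- V) V v.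
Proof.
move=> vV i; have := ler_entry_enorm v i; rewrite ler_norml => /andP [h1 h2].
apply/andP; split; lra.
Qed.

Lemma intvec_shift_cube {d} (x : 'cV[R]_d) : exists k, intvec k /\ cube d 0 1 (x - k).
Proof.
exists (\col_i ((Num.floor (x i 0))%:~R)); split.
  by move=> i; exists (Num.floor (x i 0)); rewrite mxE.
move=> i; rewrite !mxE subr_ge0 floor_le /=.
have := floorD1_gt (x i 0); rewrite intrD; lra.
Qed.

End Cube.

Section Periodic.
Context {R : realType} {d : nat}.

Lemma periodicB {T} {f : 'cV[R]_d -> T} x k : Zperiodic f -> intvec k -> f (x - k) = f x.
Proof. by move=> fP kZ; rewrite -(fP (x - k) k kZ) subrK. Qed.

Lemma periodic_bounded {f : 'cV[R]_d -> R} :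
  Zperiodic f -> continuous f -> exists C, forall x, f x <= C.
Proof.
move=> fP fc.
have cube_n0 : @cube R d 0 1 !=set0 by exists 0 => i; rewrite mxE lexx ler01.
have [c _ fc_max] := compact_EVT_max cube_n0 (cube_compact d 0 1) (continuous_subspaceT fc).
exists (f c) => x; have [k [kZ xk]] := intvec_shift_cube x.
by rewrite -(periodicB x k fP kZ); apply: fc_max; rewrite inE.
Qed.

Lemma periodic_unif_continuous {L : 'cV[R]_d -> 'cV[R]_d -> R} :
  (forall v, Zperiodic (fun x => L x v)) ->
  continuous (fun z : 'cV[R]_d * 'cV[R]_d => L z.1 z.2) ->
  forall V e, 0 < e -> exists2 eta, 0 < eta & forall x x' v, enorm v <= V ->
    enorm (x' - x) < eta -> `|L x v - L x' v| < e.
Proof.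
move=> LP Lc V e e0.
have cA : compact (@cube R d 0 1 `*` @cube R d (- V) V).
  by apply: compact_setX; exact: cube_compact.
have [eta eta0 Lunif] := @compact_unif_continuous R _ _ _ _ cA Lc e e0.
exists eta => // x x' v vV xx'.
have [k [kZ xk]] := intvec_shift_cube x.
rewrite -(periodicB x k (LP v) kZ) -(periodicB x' k (LP v) kZ).
apply: (Lunif (x - k, v) (x' - k, v)) => /=.
- by split => //; exact: cube_enorm.
- by rewrite opprB addrA subrK; exact: le_lt_trans (ler_mxnorm_enorm _) xx'.
- by rewrite subrr normr0.
Qed.

End Periodic.

Section Partition.
Context {R : realType} {n : nat} {t : nat -> R}.
Hypothesis t_incr : forall i, (i < n)%N -> t i < t i.+1.

Lemma partition_le i j : (i <= j <= n)%N -> t i <= t j.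
Proof.
elim: j => [|j IHj]; first by rewrite leqn0 => /andP [/eqP ->].
rewrite leq_eqVlt => /andP [/orP [/eqP -> //|ij] jn].
have tij : t i <= t j by apply: IHj; rewrite -ltnS ij ltnW.
exact: le_trans tij (ltW (t_incr j jn)).
Qed.

Lemma part_idxE i s : (i < n)%N -> t i <= s < t i.+1 -> part_idx n t s = i.
Proof.
move=> iN /andP [tis sti]; apply/eqP; rewrite eqn_leq; apply/andP; split.
  apply/bigmax_leqP => j tjs; rewrite leqNgt; apply/negP => ij.
  have := @partition_le i.+1 j; rewrite ij ltnW //= => /(_ isT); lra.
exact: (@leq_bigmax_cond _ (fun j : 'I_n => t j <= s) (fun j => nat_of_ord j) (Ordinal iN)).
Qed.

Lemma part_idx_last : (0 < n)%N -> part_idx n t (t n) = n.-1.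
Proof.
move=> n0; have n1N : (n.-1 < n)%N by rewrite prednK.
apply/eqP; rewrite eqn_leq; apply/andP; split.
  by apply/bigmax_leqP => j _; rewrite -ltnS prednK.
have tn1 : t n.-1 <= t n by apply: partition_le; rewrite leq_pred leqnn.
exact: (@leq_bigmax_cond _ (fun j : 'I_n => t j <= t n) (fun j => nat_of_ord j) (Ordinal n1N)).
Qed.

End Partition.

Section PiecewiseIntegral.
Context {R : realType}.
Local Notation mu := (@lebesgue_measure R).

Lemma bounded_fun_on (f : R -> R) (A : set R) (B : R) :
  (forall s, A s -> `|f s| <= B) -> [bounded f x | x in A].
Proof.
move=> fB; exists B; split; first exact: num_real.
by move=> M BM s As; apply: le_trans (fB s As) _; exact: ltW.
Qed.

Lemma integral_itvco_le (a b : R) (f g : R -> R) (c e : R) : a < b -> continuous g ->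
  (forall s, a <= s < b -> f s = g s) ->
  (forall s, a <= s < b -> `|g s - c| <= e) ->
  measurable_fun `[a, b[ f /\
  (\int[mu]_(s in `[a, b[) (f s)%:E <= ((b - a) * (c + e))%:E)%E.
Proof.
move=> ab gc fg gce.
have mf : measurable_fun `[a, b[ f.
  apply: (eq_measurable_fun g); first by move=> s; rewrite inE /= in_itv /= => /fg ->.
  exact: measurable_funS (measurable_realfun.continuous_measurable_fun gc).
split => //.
have mu_ab : mu `[a, b[ = (b - a)%:E.
  by rewrite lebesgue_measure_itv /= lte_fin ab /= -EFinB.
have mu_fin : (mu `[a, b[ < +oo)%E by rewrite mu_ab ltry.
have f_int : mu.-integrable `[a, b[ (EFin \o f).
  apply: measurable_bounded_integrable => //.
  apply: (@bounded_fun_on _ _ (`|c| + e)) => s; rewrite /= in_itv /= => sab.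
  rewrite (fg _ sab); have := gce _ sab; have := ler_normD (g s - c) c.
  rewrite subrK; lra.
have cst_int : mu.-integrable `[a, b[ (EFin \o cst (c + e)).
  apply: measurable_bounded_integrable => //.
  by apply: (@bounded_fun_on _ _ `|c + e|) => s _.
apply: le_trans (_ : (\int[mu]_(s in `[a, b[) (c + e)%:E <= _)%E).
  apply: (le_integral _ f_int cst_int) => // s; rewrite inE /= in_itv /= => sab.
  by rewrite lee_fin (fg _ sab); have := gce _ sab; rewrite ler_norml; lra.
by rewrite integral_cst // -[X in (_ * X <= _)%E]/(mu `[a, b[) mu_ab -EFinM mulrC.
Qed.

Lemma integral_piecewise_le (n : nat) (t : nat -> R) (f : R -> R)
    (g : nat -> R -> R) (c : nat -> R) (e : R) :
  t 0%N = 0 -> (forall i, (i < n)%N -> t i < t i.+1) ->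
  (forall i, (i < n)%N -> continuous (g i)) ->
  (forall i s, (i < n)%N -> t i <= s < t i.+1 -> f s = g i s) ->
  (forall i s, (i < n)%N -> t i <= s < t i.+1 -> `|g i s - c i| <= e) ->
  forall m, (m <= n)%N -> measurable_fun `[0, t m[ f /\
   (\int[mu]_(s in `[0%R, t m[) (f s)%:E <= (\sum_(i < m) (t i.+1 - t i) * (c i + e))%:E)%E.
Proof.
move=> t0 t_incr gc fg gce; elim => [_|m IHm mn].
  rewrite t0 set_itvco0 big_ord0 integral_set0; split => //.
  exact: measurable_fun_set0.
have [mf_m int_m] := IHm (ltnW mn).
have tm_lt := t_incr m mn.
have [mf_piece int_piece] := @integral_itvco_le (t m) (t m.+1) f (g m) (c m) e
   tm_lt (gc m mn) (fun s => fg m s mn) (fun s => gce m s mn).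
have tm_ge0 : 0 <= t m.
  by rewrite -t0; apply: (partition_le t_incr); rewrite leq0n ltnW.
have itv_split : (`[0, t m.+1[%classic : set R) = `[0, t m[%classic `|` `[t m, t m.+1[%classic.
  apply/seteqP; split => s /=; rewrite !in_itv /=.
    by move=> /andP [s0 sm1]; have [smt|smt] := ltP s (t m); [left|right]; rewrite ?s0 ?smt.
  by move=> [/andP [s0 sm]|/andP [s0 sm]]; apply/andP; split; lra.
have mf : measurable_fun `[0, t m.+1[ f.
  by rewrite itv_split; apply/measurable_funU => //; exact: measurable_itv.
split => //; rewrite itv_split integral_setU //.
- by rewrite big_ord_recr /= EFinD; exact: leeD.
- by apply/measurable_realfun.measurable_EFinP; rewrite -itv_split.
- rewrite /disj_set /=; apply/eqP/seteqP; split => s //=.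
  by rewrite !in_itv /= => -[/andP [_ smt] /andP [tms _]]; lra.
Qed.

End PiecewiseIntegral.

Lemma young_ineq {R : realFieldType} (K e c : R) : 0 < c ->
  K * e <= e ^+ 2 / (2 * c) + K ^+ 2 * c / 2.
Proof.
move=> c0; rewrite -subr_ge0.
have -> : e ^+ 2 / (2 * c) + K ^+ 2 * c / 2 - K * e = (e - K * c) ^+ 2 / (2 * c).
  by field; rewrite gt_eqF.
by rewrite divr_ge0 ?sqr_ge0 // mulr_ge0 // ltW.
Qed.

Section PairRV.
Context {R : realType} {d : nat}.
Implicit Types (p : 'rV[R]_d) (u v : 'cV[R]_d).

Lemma pair_rvNl p v : pair_rv (- p) v = - pair_rv p v.
Proof. by rewrite /pair_rv mulNmx mxE. Qed.

Lemma pair_rvBr p u v : pair_rv p (u - v) = pair_rv p u - pair_rv p v.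
Proof. by rewrite /pair_rv mulmxBr !mxE. Qed.

Lemma pair_rv0r p : pair_rv p 0 = 0.
Proof. by rewrite /pair_rv mulmx0 mxE. Qed.

Lemma pair_rv_scale_tr a u v : pair_rv (a *: u^T) v = a * dot u v.
Proof.
rewrite /pair_rv -scalemxAl mxE mxE; congr (_ * _).
by apply: eq_bigr => j _; rewrite mxE.
Qed.

End PairRV.

Section Estimates.
Context {R : realType} {d : nat}.
Context {phi : 'cV[R]_d -> R} {K : R} {b : R -> 'cV[R]_d -> 'cV[R]_d}.
Hypothesis K_ge0 : 0 <= K.
Hypothesis phi_lip : forall x y, `|phi x - phi y| <= K * enorm (x - y).
Hypothesis b_min : forall k x, 0 < k ->
  phi (x + b k x) + enorm (b k x) ^+ 2 / (2 * k ^+ 2) = moreau_yosida phi k x.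

Lemma lip_lower x v : phi x - K * enorm v <= phi (x + v).
Proof.
have := phi_lip x (x + v); rewrite opprD addrA subrr sub0r enormN ler_norml.
by move=> /andP [_ ?]; lra.
Qed.

Lemma moreau_yosida_le k x v : 0 < k ->
  moreau_yosida phi k x <= phi (x + v) + enorm v ^+ 2 / (2 * k ^+ 2).
Proof.
move=> k0; apply: ge_inf; last by exists v.
exists (phi x - K ^+ 2 * k ^+ 2 / 2) => _ [w _ <-].
have := lip_lower x w; have := young_ineq K (enorm w) (k ^+ 2) (exprn_gt0 2 k0); lra.
Qed.

Lemma moreau_yosida_le_id k x : 0 < k -> moreau_yosida phi k x <= phi x.
Proof.
by move=> k0; have := moreau_yosida_le k x 0 k0; rewrite addr0 enorm0 expr0n /= mul0r addr0.
Qed.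

Lemma le_moreau_yosida k x : 0 < k -> phi x <= moreau_yosida phi k x + K ^+ 2 * k ^+ 2 / 2.
Proof.
move=> k0; rewrite -b_min //.
have := lip_lower x (b k x); have := young_ineq K (enorm (b k x)) (k ^+ 2) (exprn_gt0 2 k0); lra.
Qed.

Lemma enorm_minimizer_le k x : 0 < k -> enorm (b k x) <= 2 * K * k ^+ 2.
Proof.
move=> k0; have := moreau_yosida_le_id k x k0; rewrite -b_min //.
have := lip_lower x (b k x).
have := enorm_ge0 (b k x); set e := enorm (b k x) => e0.
have c0 : 0 < 2 * k ^+ 2 by rewrite mulr_gt0 ?exprn_gt0.
move=> lower upper; have sq : e ^+ 2 <= K * e * (2 * k ^+ 2) by rewrite -ler_pdivrMr //; lra.
have [->|e_neq0] := eqVneq e 0; first by rewrite !mulr_ge0 // ltW.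
have e_gt0 : 0 < e by rewrite lt_def e_neq0.
have -> : 2 * K * k ^+ 2 = K * e * (2 * k ^+ 2) / e by field.
by rewrite ler_pdivlMr // -expr2.
Qed.

Lemma pair_p_of k x v : pair_rv (p_of b k x) v = - (dot (b k x) v / k ^+ 2).
Proof. by rewrite /p_of pair_rv_scale_tr dotNl mulrN mulrC. Qed.

Lemma penalty_shift k x h w : 0 < k ->
  enorm (b k x + h *: w) ^+ 2 / (2 * k ^+ 2) =
  enorm (b k x) ^+ 2 / (2 * k ^+ 2) - h * pair_rv (p_of b k x) w
  + h ^+ 2 * enorm w ^+ 2 / (2 * k ^+ 2).
Proof.
move=> k0; rewrite enormD_sqr dotZr enormZ exprMn real_normK ?num_real // pair_p_of.
by field; rewrite gt_eqF ?exprn_gt0.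
Qed.

Lemma moreau_yosida_descent k x h w : 0 < k ->
  moreau_yosida phi k (x + h *: w) <=
  moreau_yosida phi k x + h * pair_rv (p_of b k x) w + h ^+ 2 * enorm w ^+ 2 / (2 * k ^+ 2).
Proof.
move=> k0; have := moreau_yosida_le k (x + h *: w) (b k x + (- h) *: w) k0.
rewrite scaleNr addrA addrAC addrK -scaleNr penalty_shift // -(b_min k x k0) sqrrN mulNr.
lra.
Qed.

Lemma pair_p_of_le k x v : 0 < k -> `|pair_rv (p_of b k x) v| <= 2 * K * enorm v.
Proof.
move=> k0; have k2_gt0 : 0 < k ^+ 2 by rewrite exprn_gt0.
rewrite pair_p_of normrN normrM normrV ?unitfE ?gt_eqF //.
rewrite (gtr0_norm k2_gt0) ler_pdivrMr //.
apply: le_trans (ler_norm_dot _ _) _.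
have := enorm_minimizer_le k x k0; have := enorm_ge0 v; have := enorm_ge0 (b k x); nra.
Qed.

Lemma minimizer_slope k x h w : 0 < k ->
  h * pair_rv (p_of b k x) w - h ^+ 2 * enorm w ^+ 2 / (2 * k ^+ 2) <=
  phi (x + b k x + h *: w) - phi (x + b k x).
Proof.
move=> k0; have := moreau_yosida_le k x (b k x + h *: w) k0.
by rewrite -(b_min k x k0) penalty_shift // [x + (_ + _)]addrA; lra.
Qed.

Lemma minimizer_subdiff k x : 0 < k -> hadamard_subdiff phi (x + b k x) (p_of b k x).
Proof.
move=> k0 w e e0; set p := p_of b k x.
have c_gt0 : 0 < 2 * k ^+ 2 by rewrite mulr_gt0 ?exprn_gt0.
set Q := (enorm w + 1) ^+ 2 / (2 * k ^+ 2).
have Q_ge0 : 0 <= Q by rewrite divr_ge0 ?sqr_ge0 // ltW.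
have M_gt0 : 0 < 2 * K + Q + 1 by rewrite ltr_wpDl // addr_ge0 // mulr_ge0.
set eta := Num.min 1 (e / (2 * K + Q + 1)).
have eta_gt0 : 0 < eta by rewrite lt_min ltr01 divr_gt0.
have eta_le1 : eta <= 1 by rewrite ge_min lexx.
have etaM : eta * (2 * K + Q + 1) <= e by rewrite -ler_pdivlMr // ge_min lexx orbT.
exists eta; split => // h w' h0 h_eta w'w.
have slope := minimizer_slope k x h w' k0.
rewrite -/p ler_pdivlMr //; apply: le_trans slope.
have p_close : pair_rv p w - pair_rv p w' <= 2 * K * eta.
  rewrite -pair_rvBr; apply: le_trans (ler_norm _) _.
  apply: le_trans (pair_p_of_le k x (w - w') k0) _.
  by rewrite ler_wpM2l ?mulr_ge0 // -enormN opprB ltW.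
have w'_le : enorm w' <= enorm w + 1.
  have := ler_enormD w (w' - w); rewrite addrC subrK; lra.
have sq_le : enorm w' ^+ 2 <= (enorm w + 1) ^+ 2.
  by rewrite ler_pXn2r ?nnegrE ?addr_ge0 ?enorm_ge0.
have quad_le : h * (enorm w' ^+ 2 / (2 * k ^+ 2)) <= eta * Q.
  apply: ler_pM; [exact: ltW | by rewrite divr_ge0 ?sqr_ge0 ?ltW | exact: ltW |].
  by rewrite /Q ler_pM2r ?invr_gt0.
have key : pair_rv p w - e <= pair_rv p w' - h * (enorm w' ^+ 2 / (2 * k ^+ 2)) by lra.
by have := ler_wpM2l (ltW h0) key; lra.
Qed.

Context {L : 'cV[R]_d -> 'cV[R]_d -> R} {Hbar : R} {vv : R -> 'cV[R]_d -> 'cV[R]_d}.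
Hypothesis L_periodic : forall v, Zperiodic (fun x => L x v).
Hypothesis L_cont : continuous (fun z : 'cV[R]_d * 'cV[R]_d => L z.1 z.2).
Hypothesis L_superlinear : forall M : R, exists R0 : R, forall v, R0 <= enorm v ->
  forall x, M <= L x v / enorm v.
Hypothesis vv_max : forall k x, 0 < k ->
  vv k x \in Argmax (fun v => - pair_rv (p_of b k x) v - L (x + b k x) v).
Hypothesis phi_super : supersolution L phi Hbar.

Lemma L_comp_continuous (T : topologicalType) (f g : T -> 'cV[R]_d) :
  continuous f -> continuous g -> continuous (fun s => L (f s) (g s)).
Proof.
move=> fc gc s.
have -> : (fun s => L (f s) (g s)) =
  (fun z : 'cV[R]_d * 'cV[R]_d => L z.1 z.2) \o (fun s => (f s, g s)) by [].
apply: continuous_comp; last exact: L_cont.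
exact: (cvg_pair (fc s) (gc s)).
Qed.

Lemma control_argmax k x w : 0 < k ->
  - pair_rv (p_of b k x) w - L (x + b k x) w <=
  - pair_rv (p_of b k x) (vv k x) - L (x + b k x) (vv k x).
Proof. by move=> k0; move: (vv_max k x k0); rewrite inE => /(_ w). Qed.

Lemma supersolution_at_minimizer k x : 0 < k ->
  L (x + b k x) (vv k x) <= - Hbar - pair_rv (p_of b k x) (vv k x).
Proof.
move=> k0; have Hbar_le := phi_super.2 _ _ (minimizer_subdiff k x k0).
suff : Hbar <= - pair_rv (p_of b k x) (vv k x) - L (x + b k x) (vv k x) by lra.
apply: le_trans Hbar_le _; apply: ge_sup.
  by exists (pair_rv (- p_of b k x) 0 - L (x + b k x) 0), 0.
by move=> _ [w _ <-]; rewrite pair_rvNl; exact: control_argmax.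
Qed.

(* maximality of vv gives L(x + b, vv) <= 2K|vv| + sup L(., 0), which superlinearity caps *)
Lemma control_bounded : exists V, 0 <= V /\ forall k x, 0 < k -> enorm (vv k x) <= V.
Proof.
have L0_cont : continuous (fun x => L x 0).
  by apply: (@L_comp_continuous _ id (fun=> 0)); [move=> ?; exact: cvg_id | exact: cst_continuous].
have [C L0_le] := periodic_bounded (L_periodic 0) L0_cont.
have [R0 L_ge] := L_superlinear (2 * K + 1).
exists (Num.max (Num.max R0 1) C); split; first by rewrite !le_max ler01 orbT.
move=> k x k0; set e := enorm (vv k x).
have [e_big|e_small] := leP (Num.max R0 1) e; last by rewrite le_max (ltW e_small).
move: e_big; rewrite ge_max => /andP [R0e e1].
have := L_ge _ R0e (x + b k x); rewrite ler_pdivlMr -/e => [L_big|]; last lra.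
have := control_argmax k x 0 k0; rewrite pair_rv0r => argmax.
have := pair_p_of_le k x (vv k x) k0; rewrite ler_norml -/e => /andP [p_ge _].
have := L0_le (x + b k x); rewrite le_max => L0; apply/orP; right; lra.
Qed.

Lemma step_estimate k x h : 0 < k -> 0 <= h ->
  moreau_yosida phi k (x + h *: vv k x) + h * L (x + b k x) (vv k x) <=
  moreau_yosida phi k x - Hbar * h + h ^+ 2 * enorm (vv k x) ^+ 2 / (2 * k ^+ 2).
Proof.
move=> k0 h0; have := moreau_yosida_descent k x h (vv k x) k0.
have := ler_wpM2l h0 (supersolution_at_minimizer k x k0); lra.
Qed.

Section Motion.
Context {k delta V eps : R} {n : nat} {t : nat -> R} {y : 'cV[R]_d}.
Hypothesis k_gt0 : 0 < k.
Hypothesis t0 : t 0%N = 0.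
Hypothesis t_incr : forall i, (i < n)%N -> t i < t i.+1.
Hypothesis t_fine : fineness_le n t delta.
Hypothesis vv_le : forall x, enorm (vv k x) <= V.
Local Notation X := (nodes vv k t y).

Lemma nodes_estimate : delta * V ^+ 2 <= eps * k ^+ 2 -> forall m, (m <= n)%N ->
  \sum_(i < m) (t i.+1 - t i) * (L (X i + b k (X i)) (vv k (X i)) + eps / 2)
  + moreau_yosida phi k (X m) <= moreau_yosida phi k y - Hbar * t m + t m * eps.
Proof.
move=> small_q; elim=> [_|m IHm mn].
  by rewrite big_ord0 t0 add0r mulr0 mul0r subr0 addr0.
rewrite big_ord_recr /=; set h := t m.+1 - t m.
have h0 : 0 <= h by rewrite subr_ge0 ltW // t_incr.
have quad : h ^+ 2 * enorm (vv k (X m)) ^+ 2 / (2 * k ^+ 2) <= h * (eps / 2).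
  have k2_gt0 : 0 < 2 * k ^+ 2 by rewrite mulr_gt0 ?exprn_gt0.
  have hv : h * enorm (vv k (X m)) ^+ 2 <= delta * V ^+ 2.
    apply: ler_pM => //; [exact: sqr_ge0 | exact: t_fine |].
    by rewrite ler_pXn2r ?nnegrE ?enorm_ge0 ?(le_trans (enorm_ge0 _) (vv_le _)).
  have -> : h ^+ 2 * enorm (vv k (X m)) ^+ 2 / (2 * k ^+ 2) =
    h * (h * enorm (vv k (X m)) ^+ 2 / (2 * k ^+ 2)) by ring.
  by rewrite ler_wpM2l // ler_pdivrMr //; lra.
have := step_estimate k (X m) h k_gt0 h0; have := IHm (ltnW mn).
have -> : t m.+1 = t m + h by rewrite /h addrC subrK.
lra.
Qed.

Lemma motion_piece i s : (i < n)%N -> t i <= s < t i.+1 ->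
  motion vv k n t y s = X i + (s - t i) *: vv k (X i) /\ control vv k n t y s = vv k (X i).
Proof. by move=> iN si; rewrite /motion /control (part_idxE t_incr i s iN si). Qed.

Lemma motion_integral_le eta :
  (forall x x' v, enorm v <= V -> enorm (x' - x) < eta -> `|L x v - L x' v| < eps / 2) ->
  2 * K * k ^+ 2 + delta * V < eta ->
  measurable_fun `[0, t n[ (fun s => L (motion vv k n t y s) (control vv k n t y s)) /\
  (\int[lebesgue_measure]_(s in `[0%R, t n[)
      (L (motion vv k n t y s) (control vv k n t y s))%:E <=
   (\sum_(i < n) (t i.+1 - t i) * (L (X i + b k (X i)) (vv k (X i)) + eps / 2))%:E)%E.
Proof.
move=> L_close small_b.
apply: (@integral_piecewise_le _ n t
  (fun s => L (motion vv k n t y s) (control vv k n t y s))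
  (fun i s => L (X i + (s - t i) *: vv k (X i)) (vv k (X i)))
  (fun i => L (X i + b k (X i)) (vv k (X i))) (eps / 2) t0 t_incr _ _ _ n (leqnn n)).
- move=> i _; apply: L_comp_continuous; last exact: cst_continuous.
  move=> s; apply: cvgD; first exact: cvg_cst.
  apply: (@cvgZr_tmp _ _ _ (nbhs s) _ (fun s => s - t i)).
  by apply: cvgB; [exact: cvg_id | exact: cvg_cst].
- by move=> i s iN /(motion_piece i s iN) [-> ->].
- move=> i s iN /andP [tis sti]; rewrite distrC; apply/ltW/L_close; first exact: vv_le.
  rewrite opprD addrACA subrr add0r; apply: le_lt_trans (ler_enormD _ _) _.
  rewrite enormN enormZ ger0_norm ?subr_ge0 //.
  have := vv_le (X i); have := enorm_minimizer_le k (X i) k_gt0.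
  have := enorm_ge0 (vv k (X i)); have := t_fine i iN; nra.
Qed.

End Motion.

Lemma motion_estimate k delta V eps eta n t r y : 0 < k ->
  (forall x, enorm (vv k x) <= V) ->
  (forall x x' v, enorm v <= V -> enorm (x' - x) < eta -> `|L x v - L x' v| < eps / 2) ->
  2 * K * k ^+ 2 + delta * V < eta -> delta * V ^+ 2 <= eps * k ^+ 2 ->
  K ^+ 2 * k ^+ 2 <= 2 * eps ->
  0 < r -> time_partition n t r -> fineness_le n t delta ->
  ((phi (motion vv k n t y r))%:E +
   \int[lebesgue_measure]_(s in `[0%R, r]%classic)
     (L (motion vv k n t y s) (control vv k n t y s))%:E
   <= (phi y - Hbar * r + (r + 1) * eps)%:E)%E.
Proof.
move=> k0 vv_le L_close small_b small_q small_K r0 [t0 [tn t_incr]] t_fine.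
case: n tn t_incr t_fine => [|n] tn t_incr t_fine; first by move: r0; rewrite -tn t0 ltxx.
have [mf int_le] := motion_integral_le (y := y) k0 t0 t_incr t_fine vv_le eta L_close small_b.
have := nodes_estimate (y := y) k0 t0 t_incr t_fine vv_le small_q n.+1 (leqnn n.+1).
rewrite -tn -integral_itv_bndo_bndc; last exact/measurable_realfun.measurable_EFinP.
rewrite /motion (part_idx_last t_incr) // /= -/(nodes vv k t y n.+1) => nodes_le.
apply: le_trans (leeD (lexx _) int_le) _; rewrite -EFinD lee_fin.
have := le_moreau_yosida k (nodes vv k t y n.+1) k0; have := moreau_yosida_le_id k y k0.
lra.
Qed.

End Estimates.

Lemma small_parameters {R : realFieldType} {K V eps eta : R} :
  0 <= K -> 0 <= V -> 0 < eps -> 0 < eta ->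
  exists2 k0, 0 < k0 & exists delta : R -> R, forall k, 0 < k <= k0 ->
    [/\ 0 < delta k, 2 * K * k ^+ 2 + delta k * V < eta,
        delta k * V ^+ 2 <= eps * k ^+ 2 & K ^+ 2 * k ^+ 2 <= 2 * eps].
Proof.
move=> K0 V0 eps0 eta0.
have K1 : 0 < 4 * K + 1 by lra.
have KK1 : 0 < K ^+ 2 + 1 by rewrite ltr_pwDr ?sqr_ge0.
have V1 : 0 < 2 * V + 1 by lra.
have VV1 : 0 < V ^+ 2 + 1 by rewrite ltr_pwDr ?sqr_ge0.
exists (Num.min 1 (Num.min (eta / (4 * K + 1)) (eps / (K ^+ 2 + 1)))).
  by rewrite !lt_min ltr01 !divr_gt0.
exists (fun k => Num.min (eta / (2 * V + 1)) (eps * k ^+ 2 / (V ^+ 2 + 1))).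
move=> k /andP [k0]; rewrite !le_min => /andP [k1 /andP [k_eta k_eps]].
set dk := Num.min _ _.
have dk_eta : dk * (2 * V + 1) <= eta by rewrite -ler_pdivlMr // ge_min lexx.
have dk_eps : dk * (V ^+ 2 + 1) <= eps * k ^+ 2 by rewrite -ler_pdivlMr // ge_min lexx orbT.
move: k_eta k_eps; rewrite !ler_pdivlMr // => k_eta k_eps.
have kk : k ^+ 2 <= k by rewrite expr2 ger_pMr.
have Kkk : K * k ^+ 2 <= K * k by rewrite ler_wpM2l.
have KKkk : K ^+ 2 * k ^+ 2 <= K ^+ 2 * k by rewrite ler_wpM2l ?sqr_ge0.
split; first by rewrite lt_min !divr_gt0 ?mulr_gt0 ?exprn_gt0.
- have : 0 < dk by rewrite lt_min !divr_gt0 ?mulr_gt0 ?exprn_gt0.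
  lra.
- have : 0 <= dk by rewrite le_min !divr_ge0 ?mulr_ge0 ?sqr_ge0 ?ltW.
  lra.
- lra.
Qed.

Theorem theorem1 (R : realType) (d : nat)
  (L : 'cV[R]_d -> 'cV[R]_d -> R) (phi : 'cV[R]_d -> R) (Hbar : R)
  (b vv : R -> 'cV[R]_d -> 'cV[R]_d) :
  (* L is continuous on T^d x R^d *)
  (forall v, Zperiodic (fun x => L x v)) ->
  continuous (fun z : 'cV[R]_d * 'cV[R]_d => L z.1 z.2) ->
  (* superlinearity: lim_{|v|->oo} inf_x L(x,v)/|v| = +oo *)
  (forall M : R, exists R0 : R, forall v, R0 <= enorm v ->
      forall x, M <= L x v / enorm v) ->
  (* phi : T^d -> R Lipschitz *)
  Zperiodic phi ->
  (exists K : R, forall x y, `|phi x - phi y| <= K * enorm (x - y)) ->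
  supersolution L phi Hbar ->
  (* chosen minimizers b_k[x] of the Moreau-Yosida transform *)
  (forall k, 0 < k -> Zperiodic (b k)) ->
  (forall k x, 0 < k ->
     phi (x + b k x) + (enorm (b k x)) ^+ 2 / (2 * k ^+ 2) = moreau_yosida phi k x) ->
  (* chosen maximizers vv_k[x] *)
  (forall k, 0 < k -> Zperiodic (vv k)) ->
  (forall k x, 0 < k ->
     vv k x \in Argmax (fun v => - pair_rv (p_of b k x) v - L (x + b k x) v)) ->
  forall eps : R, 0 < eps ->
  exists k0 : R, 0 < k0 /\
  exists delta : R -> R, (forall k, 0 < k <= k0 -> 0 < delta k) /\
  forall (r : R) (k : R) (n : nat) (t : nat -> R) (y : 'cV[R]_d),
    0 < r -> 0 < k <= k0 ->
    time_partition n t r -> fineness_le n t (delta k) ->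
    ((phi (motion vv k n t y r))%:E +
     \int[@lebesgue_measure R]_(s in `[0%R, r]%classic) (L (motion vv k n t y s) (control vv k n t y s))%:E
     <= (phi y - Hbar * r + (r + 1) * eps)%:E)%E.
Proof.
move=> L_periodic L_cont L_superlinear _ [K_lip phi_lip0] phi_super _ b_min _ vv_max eps eps0.
pose K := Num.max K_lip 0.
have K_ge0 : 0 <= K by rewrite le_max lexx orbT.
have phi_lip x y : `|phi x - phi y| <= K * enorm (x - y).
  by apply: le_trans (phi_lip0 x y) _; rewrite ler_wpM2r ?enorm_ge0 ?le_max ?lexx.
have [V [V_ge0 vv_le]] := control_bounded K_ge0 phi_lip b_min L_periodic L_cont L_superlinear vv_max.
have eps2_gt0 : 0 < eps / 2 by rewrite divr_gt0.
have [eta eta0 L_close] := periodic_unif_continuous L_periodic L_cont V _ eps2_gt0.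
have [k0 k0_gt0 [delta small]] := small_parameters K_ge0 V_ge0 eps0 eta0.
exists k0; split => //; exists delta; split; first by move=> k /small [].
move=> r k n t y r0 kk0 part fine; have [_ small_b small_q small_K] := small k kk0.
have [k_gt0 _] := andP kk0.
exact: (motion_estimate K_ge0 phi_lip b_min L_cont vv_max phi_super
  k (delta k) V eps eta n t r y k_gt0 (fun x => vv_le k x k_gt0) L_close
  small_b small_q small_K r0 part fine).
Qed.
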